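(* If $\mathcal{I}$ is an unboring ideal, then the ordinal $\omega^2+1$ with the order topology is in $\mathrm{FinBW}(\mathcal{I})$.
   Context: An ideal on an infinite countable set $X$ is a family $\mathcal{I}\subseteq\mathcal{P}(X)$ closed under subsets and finite unions, containing all finite subsets, with $X\notin\mathcal{I}$. A space $X$ is in $\mathrm{FinBW}(\mathcal{I})$ if $X$ is Hausdorff and for every sequence $(x_n)_{n\in\bigcup\mathcal{I}}$ in $X$ there is $A\notin\mathcal{I}$ with $(x_n)_{n\in A}$ convergent in $X$. $\mathrm{Fin}^2$: ideal on $\omega^2$ of all $A$ with only finitely many $n$ such that $\{m:(n,m)\in A\}$ is infinite. $\mathcal{BI}$: ideal on $\omega^3$ of all $A$ for which there is $k$ with $\{(j,l):(i,j,l)\in A\}\in\mathrm{Fin}^2$ for $i<k$ and finite for $i\ge k$. $\mathcal{I}\sqsubseteq\mathcal{J}$: there is a bijection $f:\bigcup\mathcal{J}\to\bigcup\mathcal{I}$ with $f^{-1}[A]\in\mathcal{J}$ for all $A\in\mathcal{I}$. $\mathcal{I}$ is unboring if $\mathcal{BI}\not\sqsubseteq\mathcal{I}$. *)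

From HB Require Import structures.
From mathcomp Require Import all_boot all_order all_algebra.
From mathcomp Require Import all_classical all_reals all_analysis.
Set Implicit Arguments. Unset Strict Implicit. Unset Printing Implicit Defensive.
Import Order.TTheory.
Local Open Scope classical_set_scope.

(** Ideals on a set X (here: a type X; the set is [setT : set X]). *)
Definition is_ideal {X : Type} (I : set (set X)) : Prop :=
  [/\ (forall A B : set X, B `<=` A -> I A -> I B),
      (forall A B : set X, I A -> I B -> I (A `|` B)),
      (forall A : set X, finite_set A -> I A)
    & ~ I [set: X]].

Definition countably_infinite (X : Type) : Prop :=
  countable [set: X] /\ infinite_set [set: X].

Definition Fin2 : set (set (nat * nat)) :=
  fun A => finite_set [set n | infinite_set [set m | A (n, m)]].

(** BI on omega^3 (triples (i,j,l) are ((i,j),l)). *)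
Definition BI : set (set (nat * nat * nat)) :=
  fun A => exists k : nat, forall i : nat,
    ((i < k)%N -> Fin2 [set jl | A (i, jl.1, jl.2)]) /\
    ((k <= i)%N -> finite_set [set jl : nat * nat | A (i, jl.1, jl.2)]).

(** I ⊑ J : a bijection f : \bigcup J -> \bigcup I (i.e. Y -> X, since
    ideals contain all singletons) with f^-1[A] ∈ J for all A ∈ I. *)
Definition ideal_below {X Y : Type} (I : set (set X)) (J : set (set Y)) : Prop :=
  exists f : Y -> X, bijective f /\ forall A : set X, I A -> J (f @^-1` A).

Definition unboring {X : Type} (I : set (set X)) : Prop := ~ ideal_below BI I.

(** The subsequence (x_n)_{n in A} converges in T (indexed by the infinite
    countable set A, i.e. along the cofinite filter on A). *)
Definition subseq_converges {X : Type} {T : topologicalType} (x : X -> T) (A : set X) : Prop :=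
  exists y : T, forall U : set T, nbhs y U -> finite_set (A `&` (x @^-1` (~` U))).

Definition FinBW {X : Type} (I : set (set X)) (T : topologicalType) : Prop :=
  hausdorff_space T /\
  forall x : X -> T, exists A : set X, ~ I A /\ subseq_converges x A.

(** The ordinal omega^2 + 1 = { omega*a + b : a, b in omega } ∪ {omega^2}. *)
Inductive omega2p1 := Pt of nat & nat | Top.

Definition o2_enc (x : omega2p1) : bool * (nat * nat) :=
  match x with Pt a b => (false, (a, b)) | Top => (true, (0%N, 0%N)) end.
Definition o2_dec (p : bool * (nat * nat)) : omega2p1 :=
  if p.1 then Top else Pt p.2.1 p.2.2.
Lemma o2_encK : cancel o2_enc o2_dec. Proof. by case. Qed.

HB.instance Definition _ := Equality.copy omega2p1 (can_type o2_encK).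
HB.instance Definition _ := CanIsCountable o2_encK.

Definition o2_lex (x : omega2p1) : bool *l (nat *l nat) := o2_enc x.
Lemma o2_lexK : cancel o2_lex o2_dec. Proof. by case. Qed.

HB.instance Definition _ : Order.isPreorder Order.default_display omega2p1 :=
  @Order.PreCancelPartial.PrePcan Order.default_display omega2p1 _ _ o2_lex.
Fact o2_anti : antisymmetric (@Order.le Order.default_display omega2p1).
Proof. by move=> x y /(@Order.le_anti _ (bool *l (nat *l nat))) /(can_inj o2_lexK). Qed.
HB.instance Definition _ :=
  Order.Preorder_isPOrder.Build Order.default_display omega2p1 o2_anti.
HB.instance Definition _ :=
  Order.MonoTotal.Build Order.default_display omega2p1 (fun _ _ => erefl : o2_lex _ <= o2_lex _ = _)%O.

Lemma o2_le_Pt (a b c d : nat) :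
  (Pt a b <= Pt c d)%O = ((a < c)%N || ((a == c) && (b <= d)%N)).
Proof.
rewrite -[(Pt a b <= _)%O]/(o2_lex (Pt a b) <= o2_lex (Pt c d))%O /o2_lex /=.
rewrite (@lexi_pair _ _ _ bool (nat *l nat)) lexx /=.
rewrite (@lexi_pair _ _ _ nat nat) /=.
by rewrite !leEnat; case: ltngtP.
Qed.
Lemma o2_le_Top (x : omega2p1) : (x <= Top)%O.
Proof. by case: x. Qed.

From mathcomp Require Import all_boot all_order all_algebra all_classical all_analysis.
From mathcomp Require Import zify.
Import Order.TTheory.
Local Open Scope classical_set_scope.

(* Suppose no subsequence of x : X -> omega^2+1 indexed by an I-positive set
   converges. Then I contains the index sets of constant subsequences, of
   subsequences inside one block [omega*a, omega*(a+1)) taking each value finitely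
   often (they converge to omega*(a+1)), and of subsequences meeting every block
   finitely often (they converge to omega^2). Read through a coding
   u : X -> nat * nat of the points of omega^2+1, this says that I contains the
   fibres of u, the subsets of a column meeting each fibre finitely, and the sets
   meeting each column finitely. The fibres of u can then be regrouped into
   infinite fibres that are still in I: inside finite groups of consecutive
   columns, each containing an I-positive column, if there are infinitely many
   I-positive columns, and over all of X otherwise. Enumerating each new fibre by
   nat gives a bijection nat^3 -> X pulling every set of BI back into I, so BI is
   below I, against unboringness. *)

Definition thin {X Y : Type} (v : X -> Y) (A : set X) : Prop :=
  forall y, finite_set (A `&` v @^-1` [set y]).

Lemma thin_comp {X Y Z : Type} (f : Y -> Z) {v : X -> Y} {A : set X} :
  thin (f \o v) A -> thin v A.
Proof. by move=> Afin y; apply: sub_finite_set (Afin (f y)) => x [Ax /= <-]. Qed.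

Lemma thinS {X Y : Type} (v : X -> Y) (A B : set X) : B `<=` A -> thin v A -> thin v B.
Proof. by move=> BA Athin y; apply: sub_finite_set (Athin y) => x [/BA]. Qed.

Lemma finite_nat_ub {N : set nat} : finite_set N -> exists m, forall j, N j -> (j < m)%N.
Proof.
move=> /finite_seqP[s ->]; elim: s => [|a s [m ubm]]; first by exists 0%N.
exists (maxn a.+1 m) => j /=; rewrite in_cons => /orP[/eqP ->|/ubm]; lia.
Qed.

Lemma infinite_nat_gt {N : set nat} : infinite_set N -> forall k, exists j, N j /\ (k < j)%N.
Proof.
move=> Ninf k; apply: contrapT => noj; apply/Ninf/(sub_finite_set _ (finite_II k.+1)).
move=> j Nj /=; rewrite ltnS leqNgt; apply/negP => kj; exact: noj (ex_intro _ j (conj Nj kj)).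
Qed.

Lemma infinite_nat_blocks {N : set nat} : infinite_set N ->
  exists beta e : nat -> nat,
    [/\ forall n, N (e n), forall n, beta (e n) = n & forall j, (j <= e (beta j))%N].
Proof.
move=> /infinite_nat_gt /choice[next nextP].
pose e n := iter n.+1 next 0%N.
have e_incr : {homo e : m n / (m < n)%N}.
  apply: homo_ltn => [m n p|n]; first exact: ltn_trans.
  by rewrite /e iterS; case: (nextP (e n)).
have e_ge n : (n <= e n)%N by elim: n => [|n IH] //; have := e_incr n n.+1; lia.
have e_cover j : exists n, (j <= e n)%N by exists j.
exists (fun j => ex_minn (e_cover j)), e; split.
- by move=> n; rewrite /e iterS; case: (nextP (iter n next 0%N)).
- move=> n; case: ex_minnP => m em_ge m_min.
  apply/eqP; rewrite eqn_leq m_min // leqNgt; apply/negP => /e_incr; lia.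
- by move=> j; case: ex_minnP.
Qed.

Lemma finite_preimage_inj {T U : Type} {f : T -> U} {B : set U} :
  injective f -> finite_set B -> finite_set (f @^-1` B).
Proof. by move=> finj; apply: finite_preimage => x y _ _ /finj. Qed.

Lemma countable_infinite_fibres_bij {X Y : Type} {g : X -> Y} :
  countable [set: X] -> (forall y, infinite_set (g @^-1` [set y])) ->
  exists f : X -> Y * nat, bijective f /\ forall x, (f x).1 = g x.
Proof.
move=> Xcount fibre_inf.
have fibre_nat y : exists h : X -> nat, set_bij (g @^-1` [set y]) [set: nat] h.
  apply/card_set_bijP/eq_card_nat/fibre_inf.
  exact: sub_countable (subset_card_le (subsetT _)) Xcount.
have [h hbij] := choice fibre_nat.
pose f x := (g x, h (g x) x).
have f_surj yn : exists x, f x = yn.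
  case: yn => y n; have [_ _ /(_ n I) [x /= gx <-]] := hbij y.
  by exists x; rewrite /f gx.
have [finv finvK] := choice f_surj.
exists f; split => //; exists finv => // x.
have [gE hE] : g (finv (f x)) = g x /\ h (g (finv (f x))) (finv (f x)) = h (g x) x.
  by move/pair_equal_spec: (finvK (f x)).
rewrite gE in hE; have [_ hinj _] := hbij (g x).
by apply: hinj => //; rewrite inE.
Qed.

Section IdealCombinatorics.
Context {X : Type} {I : set (set X)} (I_ideal : is_ideal I).

Lemma idealS {A B : set X} : B `<=` A -> I A -> I B.
Proof. by case: I_ideal => sub _ _ _; apply: sub. Qed.

Lemma idealU {A B : set X} : I A -> I B -> I (A `|` B).
Proof. by case: I_ideal => _ U _ _; apply: U. Qed.

Lemma ideal_finite {A : set X} : finite_set A -> I A.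
Proof. by case: I_ideal => _ _ fin _; apply: fin. Qed.

Lemma ideal_setT : ~ I [set: X].
Proof. by case: I_ideal. Qed.

Lemma ideal_split (P : X -> bool) A :
  I (A `&` [set x | P x]) -> I (A `&` [set x | ~~ P x]) -> I A.
Proof.
move=> IP INP; apply: idealS (idealU IP INP) => x Ax.
by case: (boolP (P x)); [left|right].
Qed.

Lemma ideal_fibres_lt {v : X -> nat} {S : set X} {m : nat} :
  (forall j, (j < m)%N -> I (S `&` v @^-1` [set j])) -> I (S `&` [set x | (v x < m)%N]).
Proof.
elim: m => [|m IH] fibres.
  by apply: ideal_finite; apply: sub_finite_set (finite_set0 _) => x [].
apply: (ideal_split (fun x => v x < m)%N).
- by apply: idealS (IH _) => [x [[Sx _] /= ?]|j jm]; [split | apply: fibres; lia].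
- by apply: idealS (fibres m _) => // x [[Sx /= ?] /negP ?]; split => //=; lia.
Qed.

Lemma ideal_coarsen_fibres {T : countType} {S : set X} {v : X -> T} :
  ~ I S -> (forall t, I (S `&` v @^-1` [set t])) ->
  (forall A, A `<=` S -> thin v A -> I A) ->
  exists beta : T -> nat, forall n,
    I (S `&` (beta \o v) @^-1` [set n]) /\ infinite_set (S `&` (beta \o v) @^-1` [set n]).
Proof.
move=> SnotI v_fibre thinI; pose w := pickle \o v.
have w_fibre j : I (S `&` w @^-1` [set j]).
  case E: (pickle_inv j) => [t|].
  - apply: idealS (v_fibre t) => x [Sx /= wx]; split => //=.
    by move: E; rewrite -wx pickleK_inv => -[].
  - apply: ideal_finite; apply: sub_finite_set (finite_set0 _) => x [_ /= wx].
    by move: E; rewrite -wx pickleK_inv.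
pose N := [set j | infinite_set (S `&` w @^-1` [set j])].
(* Otherwise S is a finite union of fibres and a v-thin set. *)
have Ninf : infinite_set N.
  move=> /finite_nat_ub [m Nm]; apply: SnotI.
  apply: (ideal_split (fun x => w x < m)%N); first exact: ideal_fibres_lt.
  apply: thinI => [x []//|]; apply: (thin_comp pickle) => j.
  have [jm|mj] := ltnP j m.
    by apply: sub_finite_set (finite_set0 _) => x [[_ /= /negP]] + /= wx; rewrite /w /= wx.
  have : ~ N j by move=> /Nm; lia.
  by move=> /contrapT; apply: sub_finite_set => x [[Sx _] wx].
have [beta [e [eN beta_e e_beta]]] := infinite_nat_blocks Ninf.
exists (beta \o pickle) => n; split.
- apply: idealS (ideal_fibres_lt (v := w) (S := S) (m := (e n).+1) _) => [x [Sx /= <-]|j _].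
    by split => //=; rewrite ltnS; exact: e_beta.
  exact: w_fibre.
- by apply: sub_infinite_set (eN n) => x [Sx /= wx]; split => //=; rewrite -(beta_e n) -wx.
Qed.

Lemma BI_below_of_grid (g : X -> nat * nat) : countable [set: X] ->
  (forall p, I (g @^-1` [set p]) /\ infinite_set (g @^-1` [set p])) ->
  (forall i A, A `<=` [set x | (g x).1 = i] -> thin g A -> I A) ->
  (forall A, thin (fst \o g) A -> I A) ->
  ideal_below BI I.
Proof.
move=> Xcount g_fibre column_thin thinI.
have [f [fbij fg]] := countable_infinite_fibres_bij Xcount (fun p => (g_fibre p).2).
have fE x : f x = (g x, (f x).2) by rewrite -fg -surjective_pairing.
exists f; split => // A [k BIk].
have fibre_fin p : finite_set [set l | A (p, l)] -> finite_set (f @^-1` A `&` g @^-1` [set p]).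
  move=> fin; have := finite_preimage_inj (bij_inj fbij) (finite_image (pair p) fin).
  apply: sub_finite_set.
  by move=> x [Ax /= gp]; exists (f x).2; rewrite /= -gp -fE.
have column_fin i : finite_set [set jl : nat * nat | A (i, jl.1, jl.2)] ->
    finite_set (f @^-1` A `&` (fst \o g) @^-1` [set i]).
  move=> fin; pose t (jl : nat * nat) := (i, jl.1, jl.2).
  have := finite_preimage_inj (bij_inj fbij) (finite_image t fin).
  apply: sub_finite_set.
  by move=> x [Ax /= gi]; exists ((g x).2, (f x).2); rewrite /t /= -gi -surjective_pairing -fE.
apply: (ideal_split (fun x => (g x).1 < k)%N).
- apply: ideal_fibres_lt => i ik.
  have [m mbound] := finite_nat_ub ((BIk i).1 ik).
  apply: (ideal_split (fun x => (g x).2 < m)%N).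
  + apply: idealS (ideal_fibres_lt (v := snd \o g) (S := [set x | (g x).1 = i]) (m := m) _).
      by move=> x [[_ /= gi] /= jm]; split.
    by move=> j _; apply: idealS (g_fibre (i, j)).1 => x [/= <- <-]; rewrite -surjective_pairing.
  + apply: (column_thin i) => [x [[_ /= gi] _] //|[i' j]].
    have [jm|mj] := ltnP j m.
      by apply: sub_finite_set (finite_set0 _) => x [[_ /= /negP]] + /= gx; rewrite gx /=; lia.
    apply: sub_finite_set (fibre_fin (i, j) _).
      by move=> x [[[Ax /= gi] _] /= gx]; split => //=; rewrite gx -gi gx.
    by apply: contrapT => /mbound; lia.
- apply: thinI => i; have [ik|ki] := ltnP i k.
    by apply: sub_finite_set (finite_set0 _) => x [[_ /= /negP]] + /= gi; rewrite gi.
  by apply: sub_finite_set (column_fin i ((BIk i).2 ki)) => x [[Ax _] gi].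
Qed.

Lemma BI_below_of_thin_fibres (c : X -> nat) : countable [set: X] ->
  (forall n, I (c @^-1` [set n]) /\ infinite_set (c @^-1` [set n])) ->
  (forall A, thin c A -> I A) -> ideal_below BI I.
Proof.
move=> Xcount c_fibre thinI.
have [h [_ hinj hsurj]] := card_set_bijP (etrans (card_eq_sym _ _) card_nat2).
pose g := h \o c.
have g_fibre p : exists n, g @^-1` [set p] = c @^-1` [set n].
  have /hsurj[n _ hn] : [set: nat * nat] p by [].
  exists n; apply/seteqP; split => x /=; rewrite /g /= -hn; last by move=> ->.
  by move=> /hinj; apply; rewrite inE.
have g_thinI A : thin g A -> I A by move=> /(thin_comp h); exact: thinI.
apply: (BI_below_of_grid g) => // [p|i A _ /g_thinI //|A /(thin_comp fst) /g_thinI //].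
by have [n ->] := g_fibre p; exact: c_fibre.
Qed.

Section Columns.
Variable u : X -> nat * nat.
Hypothesis Xcount : countable [set: X].
Hypothesis u_fibre : forall p, I (u @^-1` [set p]).
Hypothesis column_thin : forall i A, A `<=` [set x | (u x).1 = i] -> thin u A -> I A.
Hypothesis thin_fst : forall A, thin (fst \o u) A -> I A.

Lemma BI_below_of_small_columns m :
  (forall i, (m <= i)%N -> I [set x | (u x).1 = i]) -> ideal_below BI I.
Proof.
move=> small.
(* phi collapses each column beyond m, which lies in I, to a single fibre. *)
pose phi x := if ((u x).1 < m)%N then u x else ((u x).1, 0%N).
have phi_fst x : (phi x).1 = (u x).1 by rewrite /phi; case: ifP.
have phi_thin A : thin phi A -> I A.
  move=> Athin; apply: (ideal_split (fun x => (u x).1 < m)%N).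
  - apply: (ideal_fibres_lt (v := fst \o u)) => i im.
    apply: (column_thin i) => [x [] //|p].
    apply: sub_finite_set (Athin p) => x [[Ax /= ui] /= <-]; split => //=.
    by rewrite /phi ui im.
  - apply: thin_fst => i; apply: sub_finite_set (Athin (i, 0%N)).
    by move=> x [[Ax /= /negbTE um] /= <-]; split => //=; rewrite /phi um.
have phi_fibre p : I (setT `&` phi @^-1` [set p]).
  case: p => i j; have [im|mi] := ltnP i m.
  - apply: idealS (u_fibre (i, j)) => x [_ /=]; rewrite /phi.
    by case: ifP => // + [ui]; rewrite ui im.
  - apply: idealS (small i mi) => x [_ /= phix].
    by rewrite -phi_fst phix.
have [beta beta_ok] := ideal_coarsen_fibres ideal_setT phi_fibre (fun A _ => phi_thin A).
apply: (BI_below_of_thin_fibres (beta \o phi)) => // [n|A /(thin_comp beta) /phi_thin //].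
by rewrite -[_ @^-1` _]setTI; exact: beta_ok.
Qed.

Lemma BI_below_of_large_columns :
  infinite_set [set i | ~ I [set x | (u x).1 = i]] -> ideal_below BI I.
Proof.
move=> /infinite_nat_blocks [beta [e [eN beta_e e_beta]]].
pose block n := [set x | beta (u x).1 = n].
have block_thin n A : A `<=` block n -> thin u A -> I A.
  move=> Ablock Athin.
  apply: idealS (ideal_fibres_lt (v := fst \o u) (S := A) (m := (e n).+1) _).
    by move=> x Ax; split => //=; rewrite ltnS -(Ablock x Ax); exact: e_beta.
  move=> i _; apply: (column_thin i) => [x [] //|]; by apply: thinS Athin => x [].
have block_notI n : ~ I (block n).
  by move=> blockI; apply: (eN n); apply: idealS blockI => x /= ui; rewrite /block /= ui beta_e.
have /choice[B B_ok] : forall n, exists B : nat * nat -> nat, forall k,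
    I (block n `&` (B \o u) @^-1` [set k]) /\ infinite_set (block n `&` (B \o u) @^-1` [set k]).
  move=> n; apply: ideal_coarsen_fibres (block_notI n) _ (block_thin n) => p.
  by apply: idealS (u_fibre p) => x [].
pose G p := (beta p.1, B (beta p.1) p).
have G_fibre n k : (G \o u) @^-1` [set (n, k)] = block n `&` (B n \o u) @^-1` [set k].
  by apply/seteqP; split => x /=; rewrite /G; [case=> <- <-|case=> -> ->].
apply: (BI_below_of_grid (G \o u)) => //.
- by move=> [n k]; rewrite G_fibre; exact: B_ok.
- by move=> n A An /(thin_comp G); apply: block_thin An.
- by move=> A /(thin_comp beta) /thin_fst.
Qed.

Lemma BI_below_of_columns : ideal_below BI I.
Proof.
have [Nfin|] := pselect (finite_set [set i | ~ I [set x | (u x).1 = i]]).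
  have [m Nm] := finite_nat_ub Nfin.
  by apply: (BI_below_of_small_columns m) => i mi; apply: contrapT => /Nm; lia.
exact: BI_below_of_large_columns.
Qed.

End Columns.
End IdealCombinatorics.

Lemma order_nbhs_left {d} {T : orderType d} {y0 y : T} {U : set (order_topology T)} :
  (y0 < y)%O -> nbhs (y : order_topology T) U ->
  exists2 l : T, (l < y)%O & forall z, (l < z)%O -> (z <= y)%O -> U z.
Proof.
move=> y0y; rewrite order_nbhs_itv => -[[lb rb] [/= oe]].
rewrite itv_boundlr => /andP[lby yrb] iU.
have z_in z : (lb <= BLeft z)%O -> (z <= y)%O -> U z.
  move=> lbz zy; apply: iU; rewrite /= itv_boundlr lbz /=.
  by apply: le_trans yrb; rewrite bnd_simp.
case: lb {iU} oe lby z_in => [b l|b] oe lby z_in.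
- rewrite (itv_open_ends_lside oe) in lby z_in.
  by exists l => [|z lz]; [move: lby | apply: z_in]; rewrite bnd_simp.
- rewrite (itv_open_ends_linfty oe) in lby z_in.
  by exists y0 => // z _; apply: z_in.
Qed.

(* (a.+1, b) codes omega*a + b; column 0 is reserved for omega^2. *)
Definition o2_code (z : omega2p1) : nat * nat := if z is Pt a b then (a.+1, b) else (0, 0)%N.

Lemma subseq_converges_sub_fibre {X : Type} {T : topologicalType} {x : X -> T} {A : set X}
    {y : T} :
  A `<=` x @^-1` [set y] -> subseq_converges x A.
Proof.
move=> Ay; exists y => U /nbhs_singleton Uy.
by apply: sub_finite_set (finite_set0 _) => z [/Ay /= -> /(_ Uy)].
Qed.

Lemma subseq_converges_column {X : Type} (x : X -> order_topology omega2p1) a (A : set X) :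
  A `<=` [set z | (o2_code (x z)).1 = a.+1] -> thin (o2_code \o x) A ->
  subseq_converges x A.
Proof.
move=> Acol Athin; exists (Pt a.+1 0) => U Unbhs.
have y0y : (Pt 0 0 < Pt a.+1 0)%O by rewrite ltNge o2_le_Pt.
have [[a' b'|] ly lU] := order_nbhs_left y0y Unbhs; last by move: ly; rewrite ltNge o2_le_Top.
apply: sub_finite_set (bigcup_finite (finite_II b'.+1) (fun b _ => Athin (a.+1, b))).
move=> z [Az /= notU]; move: (Acol z Az) notU; rewrite /=.
case E: (x z) => [a0 b0|] //= [a0a] notU; subst a0; exists b0; last by split => //=; rewrite E.
rewrite /= ltnS leqNgt; apply/negP => b'b0; apply: notU; apply: lU.
- by move: ly; rewrite !ltNge !o2_le_Pt; lia.
- by rewrite o2_le_Pt; lia.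
Qed.

Lemma subseq_converges_Top {X : Type} (x : X -> order_topology omega2p1) (A : set X) :
  thin (fst \o o2_code \o x) A -> subseq_converges x A.
Proof.
move=> Athin; exists Top => U Unbhs.
have y0y : (Pt 0 0 < Top)%O by rewrite lt_neqAle o2_le_Top.
have [[a' b'|] ly lU] := order_nbhs_left y0y Unbhs; last by rewrite ltxx in ly.
apply: sub_finite_set (bigcup_finite (finite_II a'.+2) (fun i _ => Athin i)).
move=> z [Az /= notU]; case E: (x z) => [a b|]; last first.
  by move: notU; rewrite E => /(_ (nbhs_singleton Unbhs)).
exists a.+1; last by split => //=; rewrite E.
rewrite /= ltnS leqNgt; apply/negP => a'a; apply: notU; rewrite E; apply: lU (o2_le_Top _).
by rewrite ltNge o2_le_Pt; lia.
Qed.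

Lemma BI_below_of_no_convergent_subseq {X : Type} {I : set (set X)}
    (x : X -> order_topology omega2p1) :
  countable [set: X] -> is_ideal I -> (forall A, subseq_converges x A -> I A) ->
  ideal_below BI I.
Proof.
move=> Xcount I_ideal cvgI; apply: (BI_below_of_columns I_ideal (o2_code \o x) Xcount).
- move=> [[|a] b]; apply/cvgI.
    by apply: (subseq_converges_sub_fibre (y := Top : order_topology _)) => z /=; case: (x z).
  apply: (subseq_converges_sub_fibre (y := Pt a b : order_topology _)) => z /=.
  by case: (x z) => // ? ? [-> ->].
- move=> [|a] A Acol Athin; apply/cvgI; last exact: subseq_converges_column Acol Athin.
  apply: (subseq_converges_sub_fibre (y := Top : order_topology _)) => z /Acol /=.
  by case: (x z).
- by move=> A /subseq_converges_Top /cvgI.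
Qed.

Theorem proposition6p2 (X : Type) (I : set (set X)) :
  countably_infinite X -> is_ideal I -> unboring I ->
  FinBW I (order_topology omega2p1).
Proof.
move=> [Xcount _] I_ideal unbI; split; first exact: order_hausdorff.
move=> x; apply: contrapT => no_cvg; apply: unbI.
apply: (BI_below_of_no_convergent_subseq x Xcount I_ideal) => A Acvg.
by apply: contrapT => AnotI; apply: no_cvg; exists A.
Qed.
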